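(* For $(a,b)\in\{-,+\}^2$ let $f_{ab}(\pi)=F(\pi,\mu_a,\sigma_b)$. Then $$\min_{\pi\in\mathbb R}\max_{(\mu,\sigma)\in D}F(\pi,\mu,\sigma)=\min_{\pi\in\mathbb R}\max_{(a,b)\in\{-,+\}^2}f_{ab}(\pi)=\max_{\{(a,b),(c,d)\}}\ \min_{\pi\in\mathbb R}\max\big(f_{ab}(\pi),f_{cd}(\pi)\big),$$ where the last maximum is over all pairs of distinct corners $(a,b)\neq(c,d)$ in $\{-,+\}^2$.
   Context: Let $0<\mu_-<\mu_+$ and $0<\sigma_-<\sigma_+$ be real numbers, $D=[\mu_-,\mu_+]\times[\sigma_-,\sigma_+]$, and $h_0,h_1\in\mathbb R$. For $\pi\in\mathbb R$ and $(\mu,\sigma)\in D$ put $F(\pi,\mu,\sigma)=(h_0-\pi\mu)^2+(h_1-\pi\sigma)^2$. *)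

From Stdlib Require Import Reals.
Open Scope R_scope.

Definition F (h0 h1 p mu sigma : R) : R :=
  (h0 - p * mu) ^ 2 + (h1 - p * sigma) ^ 2.

Definition is_max (P : R -> Prop) (m : R) : Prop :=
  P m /\ forall x, P x -> x <= m.

Definition is_min (P : R -> Prop) (m : R) : Prop :=
  P m /\ forall x, P x -> m <= x.

(* corner selector: true = "+", false = "-" *)
Definition sel (b : bool) (lo hi : R) : R := if b then hi else lo.

Definition fcorner (h0 h1 mum mup sgm sgp : R) (ab : bool * bool) (p : R) : R :=
  F h0 h1 p (sel (fst ab) mum mup) (sel (snd ab) sgm sgp).

Definition fmax4 (h0 h1 mum mup sgm sgp p : R) : R :=
  let f := fun ab => fcorner h0 h1 mum mup sgm sgp ab p in
  Rmax (Rmax (f (false, false)) (f (false, true)))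
       (Rmax (f (true, false)) (f (true, true))).

Definition valsD (h0 h1 mum mup sgm sgp p : R) : R -> Prop :=
  fun v => exists mu sigma, mum <= mu <= mup /\ sgm <= sigma <= sgp /\
                            v = F h0 h1 p mu sigma.

From Stdlib Require Import Reals Lra Psatz Classical.
Open Scope R_scope.

(* For fixed pi, F(pi, mu, sigma) is a sum of squares of functions affine in mu and in
   sigma, hence convex in each variable, so its maximum over D is attained at a corner:
   max_D F(pi, ., .) = fmax4(pi), the maximum of the four corner functions f_ab.
   Each f_ab grows quadratically in pi (because sigma >= sgm > 0) and is continuous, so
   fmax4 and every maximum of two corner functions attain their minimum over R.
   For the last equality, let V = min fmax4.  Each f_ab is convex in pi, so the strict
   sublevel sets {pi | f_ab(pi) < V} are intervals; if every pair of them met, Helly's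
   theorem on the line would give a common point, where fmax4 < V.  Hence some pair of
   distinct corners satisfies max(f_ab, f_cd) >= V everywhere, and this pair realises V;
   every other pair gives at most V since max(f_ab, f_cd) <= fmax4. *)

(* The pointwise maximum of two functions continuous at x is continuous at x,
   since Rmax a b = (a + b + |a - b|) / 2. *)
Lemma continuity_pt_Rmax (f g : R -> R) (x : R) :
  continuity_pt f x -> continuity_pt g x -> continuity_pt (fun p => Rmax (f p) (g p)) x.
Proof.
  intros Hf Hg.
  apply continuity_pt_locally_ext with (fun p => (f p + g p + Rabs (f p - g p)) / 2) 1;
    [lra | |].
  { intros p _. unfold Rmax; destruct Rle_dec; unfold Rabs; destruct Rcase_abs; lra. }
  apply continuity_pt_div; [| apply continuity_pt_const; intros u v; reflexivity | lra].
  apply continuity_pt_plus; [apply continuity_pt_plus; assumption |].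
  apply (continuity_pt_comp (fun p => f p - g p) Rabs);
    [apply continuity_pt_minus; assumption | apply Rcontinuity_abs].
Qed.

(* A continuous function bounded below by c x^2 - d with c > 0 attains its minimum:
   outside a large interval it exceeds h 0, and inside it a minimum exists by compactness. *)
Lemma min_of_quadratic_growth (h : R -> R) (c d : R) :
  0 < c -> (forall x, continuity_pt h x) -> (forall x, c * x ^ 2 - d <= h x) ->
  exists p, forall x, h p <= h x.
Proof.
  intros Hc Hcont Hgrow.
  set (R0 := 1 + (Rabs (h 0) + Rabs d) / c).
  assert (HR0 : 1 <= R0).
  { unfold R0. assert (0 <= (Rabs (h 0) + Rabs d) / c); [| lra].
    apply Rmult_le_pos; [pose proof (Rabs_pos (h 0)); pose proof (Rabs_pos d); lra |].
    left; apply Rinv_0_lt_compat; lra. }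
  assert (Hfar : forall x, R0 < Rabs x -> h 0 <= h x).
  { intros x Hx.
    assert (Hsq : x ^ 2 = Rabs x * Rabs x) by (rewrite <- (pow2_abs x); ring).
    assert (Hlin : Rabs (h 0) + Rabs d < c * Rabs x).
    { assert (c * R0 = c + (Rabs (h 0) + Rabs d)) by (unfold R0; field; lra).
      apply (Rmult_lt_compat_l c) in Hx; lra. }
    assert (Hquad : c * Rabs x <= c * x ^ 2).
    { rewrite Hsq. apply Rmult_le_compat_l; [lra |].
      rewrite <- (Rmult_1_l (Rabs x)) at 1. apply Rmult_le_compat_r; [apply Rabs_pos | lra]. }
    pose proof (Hgrow x). pose proof (Rle_abs (h 0)). pose proof (Rle_abs d). lra. }
  destruct (continuity_ab_min h (- R0) R0) as [m [Hm _]]; [lra | intros; apply Hcont |].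
  exists m. intro x.
  destruct (Rle_dec (Rabs x) R0) as [Hin | Hout].
  - apply Hm. pose proof (Rle_abs x). pose proof (Rle_abs (- x)).
    rewrite Rabs_Ropp in *. lra.
  - apply Rle_trans with (h 0); [apply Hm; lra | apply Hfar; lra].
Qed.

(* Convexity on the line, written as the chord inequality without division. *)
Definition convex (f : R -> R) : Prop :=
  forall a x b, a <= x <= b -> (b - a) * f x <= (b - x) * f a + (x - a) * f b.

Definition order_convex (S : R -> Prop) : Prop :=
  forall a x b, a <= x <= b -> S a -> S b -> S x.

(* The square of an affine function is convex: the chord defect is m^2 (x-a)(b-x)(b-a). *)
Lemma convex_sq_affine (c m : R) : convex (fun t => (c - m * t) ^ 2).
Proof.
  intros a x b Hx.
  assert (0 <= m ^ 2 * ((x - a) * (b - x) * (b - a))).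
  { apply Rmult_le_pos; [apply pow2_ge_0 |].
    apply Rmult_le_pos; [apply Rmult_le_pos |]; lra. }
  nra.
Qed.

Lemma convex_plus (f g : R -> R) : convex f -> convex g -> convex (fun t => f t + g t).
Proof. intros Hf Hg a x b Hx. pose proof (Hf a x b Hx). pose proof (Hg a x b Hx). lra. Qed.

Lemma convex_le_Rmax (f : R -> R) (a x b : R) :
  convex f -> a <= x <= b -> f x <= Rmax (f a) (f b).
Proof.
  intros Hf Hx.
  pose proof (Hf a x b Hx). pose proof (Rmax_l (f a) (f b)). pose proof (Rmax_r (f a) (f b)).
  destruct (Req_dec a b) as [-> | Hab].
  - replace x with b by lra. assumption.
  - assert (Hgap : 0 < b - a) by lra.
    apply (Rmult_le_reg_l (b - a)); [assumption | nra].
Qed.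

Lemma sublevel_order_convex (f : R -> R) (V : R) :
  convex f -> order_convex (fun p => f p < V).
Proof.
  intros Hf a x b Hx Ha Hb.
  eapply Rle_lt_trans; [apply (convex_le_Rmax f a x b Hf Hx) | apply Rmax_lub_lt; assumption].
Qed.

Lemma Rmin3_le (a b c : R) :
  Rmin (Rmin a b) c <= a /\ Rmin (Rmin a b) c <= b /\ Rmin (Rmin a b) c <= c.
Proof. unfold Rmin; repeat destruct Rle_dec; lra. Qed.

Lemma Rmax3_ge (a b c : R) :
  a <= Rmax (Rmax a b) c /\ b <= Rmax (Rmax a b) c /\ c <= Rmax (Rmax a b) c.
Proof. unfold Rmax; repeat destruct Rle_dec; lra. Qed.

(* With p_ij a common point of S_i and S_j, lo_i and hi_i the lowest and highest
   witnesses of S_i, the smallest of the hi_i lies in every [lo_i, hi_i]. *)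
Lemma helly_line (S1 S2 S3 S4 : R -> Prop) :
  order_convex S1 -> order_convex S2 -> order_convex S3 -> order_convex S4 ->
  (exists p, S1 p /\ S2 p) -> (exists p, S1 p /\ S3 p) -> (exists p, S1 p /\ S4 p) ->
  (exists p, S2 p /\ S3 p) -> (exists p, S2 p /\ S4 p) -> (exists p, S3 p /\ S4 p) ->
  exists x, S1 x /\ S2 x /\ S3 x /\ S4 x.
Proof.
  intros C1 C2 C3 C4 [p12 [A12 B12]] [p13 [A13 B13]] [p14 [A14 B14]]
    [p23 [A23 B23]] [p24 [A24 B24]] [p34 [A34 B34]].
  (* any two sets share a witness, so every lowest witness lies below every highest one *)
  pose proof (Rmin3_le p12 p13 p14). pose proof (Rmax3_ge p12 p13 p14).
  pose proof (Rmin3_le p12 p23 p24). pose proof (Rmax3_ge p12 p23 p24).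
  pose proof (Rmin3_le p13 p23 p34). pose proof (Rmax3_ge p13 p23 p34).
  pose proof (Rmin3_le p14 p24 p34). pose proof (Rmax3_ge p14 p24 p34).
  set (lo1 := Rmin (Rmin p12 p13) p14) in *. set (hi1 := Rmax (Rmax p12 p13) p14) in *.
  set (lo2 := Rmin (Rmin p12 p23) p24) in *. set (hi2 := Rmax (Rmax p12 p23) p24) in *.
  set (lo3 := Rmin (Rmin p13 p23) p34) in *. set (hi3 := Rmax (Rmax p13 p23) p34) in *.
  set (lo4 := Rmin (Rmin p14 p24) p34) in *. set (hi4 := Rmax (Rmax p14 p24) p34) in *.
  assert (Hlo1 : S1 lo1) by (unfold lo1; repeat apply Rmin_case; assumption).
  assert (Hhi1 : S1 hi1) by (unfold hi1; repeat apply Rmax_case; assumption).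
  assert (Hlo2 : S2 lo2) by (unfold lo2; repeat apply Rmin_case; assumption).
  assert (Hhi2 : S2 hi2) by (unfold hi2; repeat apply Rmax_case; assumption).
  assert (Hlo3 : S3 lo3) by (unfold lo3; repeat apply Rmin_case; assumption).
  assert (Hhi3 : S3 hi3) by (unfold hi3; repeat apply Rmax_case; assumption).
  assert (Hlo4 : S4 lo4) by (unfold lo4; repeat apply Rmin_case; assumption).
  assert (Hhi4 : S4 hi4) by (unfold hi4; repeat apply Rmax_case; assumption).
  set (x := Rmin (Rmin hi1 hi2) (Rmin hi3 hi4)).
  assert (Hx_hi : x <= hi1 /\ x <= hi2 /\ x <= hi3 /\ x <= hi4)
    by (unfold x, Rmin; repeat destruct Rle_dec; lra).
  assert (Hlo_x : forall lo, lo <= hi1 -> lo <= hi2 -> lo <= hi3 -> lo <= hi4 -> lo <= x)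
    by (intros; unfold x; repeat apply Rmin_glb; assumption).
  exists x. repeat split.
  - apply (C1 lo1 x hi1); [split; [apply Hlo_x | ]; lra | assumption | assumption].
  - apply (C2 lo2 x hi2); [split; [apply Hlo_x | ]; lra | assumption | assumption].
  - apply (C3 lo3 x hi3); [split; [apply Hlo_x | ]; lra | assumption | assumption].
  - apply (C4 lo4 x hi4); [split; [apply Hlo_x | ]; lra | assumption | assumption].
Qed.

Lemma fcorner_convex (h0 h1 mum mup sgm sgp : R) (ab : bool * bool) :
  convex (fcorner h0 h1 mum mup sgm sgp ab).
Proof.
  unfold fcorner, F.
  set (mu := sel (fst ab) mum mup). set (s := sel (snd ab) sgm sgp).
  apply convex_plus; intros a x b Hx.
  - pose proof (convex_sq_affine h0 mu a x b Hx) as H; simpl in H.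
    rewrite !(Rmult_comm _ mu). exact H.
  - pose proof (convex_sq_affine h1 s a x b Hx) as H; simpl in H.
    rewrite !(Rmult_comm _ s). exact H.
Qed.

(* If four convex functions on the line have, at every point, one value >= V, then
   already two of them do: otherwise their strict V-sublevel intervals meet pairwise and,
   by Helly, have a common point where all four values are < V. *)
Lemma binding_pair (f : bool * bool -> R -> R) (V : R) :
  (forall ab, convex (f ab)) -> (forall p, exists ab, V <= f ab p) ->
  exists ab cd, ab <> cd /\ forall p, V <= Rmax (f ab p) (f cd p).
Proof.
  intros Hconv Hcover.
  apply NNPP. intro Hnone.
  assert (Hmeet : forall ab cd, ab <> cd -> exists p, f ab p < V /\ f cd p < V).
  { intros ab cd Hne. apply NNPP. intro Hsep. apply Hnone. exists ab, cd. split; [exact Hne |].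
    intro p. apply Rnot_lt_le. intro Hlt. apply Hsep. exists p.
    split; eapply Rle_lt_trans; [apply Rmax_l | exact Hlt | apply Rmax_r | exact Hlt]. }
  destruct (helly_line (fun p => f (false, false) p < V) (fun p => f (false, true) p < V)
                       (fun p => f (true, false) p < V) (fun p => f (true, true) p < V))
    as [x Hx];
    try (apply sublevel_order_convex; apply Hconv); try (apply Hmeet; discriminate).
  destruct (Hcover x) as [[[|] [|]] Hge]; lra.
Qed.

Section Corners.
Variables h0 h1 mum mup sgm sgp : R.

Local Notation fc := (fcorner h0 h1 mum mup sgm sgp).
Local Notation g := (fmax4 h0 h1 mum mup sgm sgp).

Lemma fcorner_le_fmax4 (ab : bool * bool) (p : R) : fc ab p <= g p.
Proof.
  unfold fmax4.
  destruct ab as [[|] [|]]; unfold Rmax; repeat destruct Rle_dec; lra.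
Qed.

Lemma fmax4_is_corner (p : R) : exists ab, g p = fc ab p.
Proof.
  unfold fmax4.
  unfold Rmax at 1; destruct Rle_dec; unfold Rmax; destruct Rle_dec.
  - exists (true, true); reflexivity.
  - exists (true, false); reflexivity.
  - exists (false, true); reflexivity.
  - exists (false, false); reflexivity.
Qed.

(* F is convex in mu and in sigma separately, so on D it is bounded by its corner values. *)
Lemma F_le_fmax4 (p mu s : R) : mum <= mu <= mup -> sgm <= s <= sgp ->
  F h0 h1 p mu s <= g p.
Proof.
  intros Hmu Hs. unfold fmax4, fcorner, F; simpl.
  pose proof (convex_le_Rmax _ _ _ _ (convex_sq_affine h0 p) Hmu) as Hmu_corner.
  pose proof (convex_le_Rmax _ _ _ _ (convex_sq_affine h1 p) Hs) as Hs_corner.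
  revert Hmu_corner Hs_corner. unfold Rmax; repeat destruct Rle_dec; lra.
Qed.

Lemma fmax4_is_max_valsD (p : R) : mum <= mup -> sgm <= sgp ->
  is_max (valsD h0 h1 mum mup sgm sgp p) (g p).
Proof.
  intros Hmu Hs. split.
  - destruct (fmax4_is_corner p) as [[a b] ->].
    exists (sel a mum mup), (sel b sgm sgp).
    split; [| split; [| reflexivity]]; [destruct a | destruct b]; simpl; lra.
  - intros v (mu & s & Hmu' & Hs' & ->). apply F_le_fmax4; assumption.
Qed.

Lemma continuity_fcorner (ab : bool * bool) (p : R) : continuity_pt (fc ab) p.
Proof. unfold fcorner, F. reg. Qed.

Lemma continuity_fmax4 (p : R) : continuity_pt g p.
Proof.
  unfold fmax4. cbv zeta.
  apply continuity_pt_Rmax; apply continuity_pt_Rmax; apply continuity_fcorner.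
Qed.

Hypothesis sgm_pos : 0 < sgm.
Hypothesis sgm_le_sgp : sgm <= sgp.

(* Quadratic growth in pi, coming from the sigma-term since sigma >= sgm > 0:
   (h1 - pi sigma)^2 >= (pi sigma)^2 / 2 - h1^2. *)
Lemma fcorner_growth (ab : bool * bool) (p : R) : sgm ^ 2 / 2 * p ^ 2 - h1 ^ 2 <= fc ab p.
Proof.
  unfold fcorner, F.
  set (mu := sel (fst ab) mum mup). set (s := sel (snd ab) sgm sgp).
  assert (Hs : sgm <= s) by (unfold s, sel; destruct (snd ab); lra).
  assert (Hps : sgm ^ 2 * p ^ 2 <= (p * s) ^ 2).
  { replace ((p * s) ^ 2) with (s ^ 2 * p ^ 2) by ring.
    apply Rmult_le_compat_r; [apply pow2_ge_0 | apply pow_incr; lra]. }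
  pose proof (pow2_ge_0 (h0 - p * mu)). pose proof (pow2_ge_0 (2 * h1 - p * s)).
  nra.
Qed.

Lemma fmax4_attains_min : exists ps, forall p, g ps <= g p.
Proof.
  apply (min_of_quadratic_growth g (sgm ^ 2 / 2) (h1 ^ 2)).
  - pose proof (pow_lt sgm 2 sgm_pos). lra.
  - apply continuity_fmax4.
  - intro p. eapply Rle_trans; [apply (fcorner_growth (false, false)) | apply fcorner_le_fmax4].
Qed.

Lemma pair_attains_min (ab cd : bool * bool) :
  exists q, forall p, Rmax (fc ab q) (fc cd q) <= Rmax (fc ab p) (fc cd p).
Proof.
  apply (min_of_quadratic_growth (fun p => Rmax (fc ab p) (fc cd p)) (sgm ^ 2 / 2) (h1 ^ 2)).
  - pose proof (pow_lt sgm 2 sgm_pos). lra.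
  - intro p. apply continuity_pt_Rmax; apply continuity_fcorner.
  - intro p. eapply Rle_trans; [apply (fcorner_growth ab) | apply Rmax_l].
Qed.

End Corners.

Lemma is_max_unique (P : R -> Prop) (m1 m2 : R) : is_max P m1 -> is_max P m2 -> m1 = m2.
Proof. intros [H1 U1] [H2 U2]. apply Rle_antisym; [apply U2 | apply U1]; assumption. Qed.

Lemma is_min_of_minimizer (h : R -> R) (q : R) :
  (forall p, h q <= h p) -> is_min (fun v => exists p, v = h p) (h q).
Proof. intro Hq. split; [exists q; reflexivity | intros v [p ->]; apply Hq]. Qed.

Theorem mainTheorem11 (mum mup sgm sgp h0 h1 : R) :
  0 < mum -> mum < mup -> 0 < sgm -> sgm < sgp ->
  exists V : R,
    (forall p : R, exists m, is_max (valsD h0 h1 mum mup sgm sgp p) m) /\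
    is_min (fun v => exists p m, is_max (valsD h0 h1 mum mup sgm sgp p) m /\ v = m) V /\
    is_min (fun v => exists p, v = fmax4 h0 h1 mum mup sgm sgp p) V /\
    (forall ab cd : bool * bool, ab <> cd ->
       exists m, is_min (fun w => exists p,
         w = Rmax (fcorner h0 h1 mum mup sgm sgp ab p)
                  (fcorner h0 h1 mum mup sgm sgp cd p)) m) /\
    is_max (fun v => exists ab cd : bool * bool, ab <> cd /\
              is_min (fun w => exists p,
                w = Rmax (fcorner h0 h1 mum mup sgm sgp ab p)
                         (fcorner h0 h1 mum mup sgm sgp cd p)) v) V.
Proof.
  intros _ Hmu Hsgm_pos Hsg.
  set (fc := fcorner h0 h1 mum mup sgm sgp). set (g := fmax4 h0 h1 mum mup sgm sgp).
  assert (Hvals : forall p, is_max (valsD h0 h1 mum mup sgm sgp p) (g p))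
    by (intro p; apply fmax4_is_max_valsD; lra).
  assert (Hsg_le : sgm <= sgp) by lra.
  destruct (fmax4_attains_min h0 h1 mum mup sgm sgp Hsgm_pos Hsg_le) as [ps Hps].
  (* some pair of distinct corners keeps its maximum above V = fmax4(ps) everywhere *)
  destruct (binding_pair fc (g ps)) as (ab & cd & Hne & Hbind).
  { intro ab. apply fcorner_convex. }
  { intro p. destruct (fmax4_is_corner h0 h1 mum mup sgm sgp p) as [ab Hab].
    exists ab. unfold fc. rewrite <- Hab. apply Hps. }
  assert (Hpair_le : forall a c p, Rmax (fc a p) (fc c p) <= g p)
    by (intros; apply Rmax_lub; apply fcorner_le_fmax4).
  exists (g ps). split; [| split; [| split; [| split]]].
  - intro p. exists (g p). apply Hvals.
  - split; [exists ps, (g ps); split; [apply Hvals | reflexivity] |].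
    intros v (p & m & Hm & ->). rewrite (is_max_unique _ _ _ Hm (Hvals p)). apply Hps.
  - apply is_min_of_minimizer. exact Hps.
  - intros a c _.
    destruct (pair_attains_min h0 h1 mum mup sgm sgp Hsgm_pos Hsg_le a c) as [q Hq].
    eexists. apply (is_min_of_minimizer (fun p => Rmax (fc a p) (fc c p))). exact Hq.
  - split.
    + exists ab, cd. split; [exact Hne |].
      assert (Hval : Rmax (fc ab ps) (fc cd ps) = g ps)
        by (apply Rle_antisym; [apply Hpair_le | apply Hbind]).
      rewrite <- Hval at 1.
      split; [exists ps; reflexivity | intros w [p ->]; rewrite Hval; apply Hbind].
    + intros v (a & c & _ & _ & Hmin). eapply Rle_trans; [apply Hmin | apply Hpair_le].
      exists ps. reflexivity.
Qed.
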